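(* Let $G(\mathcal V,\mathcal E)$ be a finite simple directed graph and $f\ge 0$ an integer, and assume Condition 1 holds for $G$. Let $A,B,F$ be a partition of $\mathcal V$ with $A$ non-empty and $|F|\le f$ ($B$ may be empty). If $B\not\rightarrow A$, then $A \Rightarrow_{\mathcal V - F} B$.
   Context: For disjoint sets $X,Y\subseteq\mathcal V$ with $Y$ non-empty, $X\rightarrow Y$ means that $X$ contains at least $f+1$ distinct nodes $i$ such that $(i,j)\in\mathcal E$ for some $j\in Y$; $X\not\rightarrow Y$ means this fails. Condition 1: for every partition $L,C,R,F$ of $\mathcal V$ (with $C$ or $F$ possibly empty) such that $L,R$ are non-empty and $|F|\le f$, either $L\cup C\rightarrow R$ or $R\cup C\rightarrow L$. An $(A,b)$-path is a directed path from some node of $A$ to the node $b\notin A$; it excludes $F$ if it contains no node of $F$; $(A,b)$-paths are disjoint if they pairwise share only $b$. For pairwise disjoint $A,B,F$ with $|F|\le f$, $A \Rightarrow_{\mathcal V - F} B$ means: $B=\emptyset$, or every $b\in B$ has at least $f+1$ pairwise disjoint $(A,b)$-paths excluding $F$. *)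

From mathcomp Require Import all_boot.
Set Implicit Arguments. Unset Strict Implicit. Unset Printing Implicit Defensive.

(* A finite simple directed graph: vertex set V (a finType), edge relation E,
   with no self loops (simple: at most one edge (i,j) per ordered pair,
   automatic for a relation). *)
Definition simple_digraph (V : finType) (E : rel V) : Prop :=
  forall v : V, ~~ E v v.

Definition reaches (V : finType) (E : rel V) (f : nat) (X Y : {set V}) : Prop :=
  f.+1 <= #|[set i in X | [exists j in Y, E i j]]|.

(* X, Y disjoint, Y nonempty are side conditions of the notation; they are
   supplied as hypotheses wherever the notation is used. *)

Definition partition4 (V : finType) (L C R F : {set V}) : Prop :=
  [&& [disjoint L & C], [disjoint L & R], [disjoint L & F],
      [disjoint C & R], [disjoint C & F], [disjoint R & F]
    & L :|: C :|: R :|: F == [set: V]].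

Definition partition3 (V : finType) (A B F : {set V}) : Prop :=
  [/\ [disjoint A & B], [disjoint A & F], [disjoint B & F]
    & A :|: B :|: F = [set: V]].

Definition condition1 (V : finType) (E : rel V) (f : nat) : Prop :=
  forall L C R F : {set V},
    partition4 L C R F -> L != set0 -> R != set0 -> #|F| <= f ->
    reaches E f (L :|: C) R \/ reaches E f (R :|: C) L.

Definition ABpath (V : finType) (E : rel V) (A : {set V}) (b : V) (p : seq V) : Prop :=
  b \notin A /\
  exists x q, p = x :: q /\ path E x q /\ uniq p /\ x \in A /\ last x q = b.

Definition excludes (V : finType) (F : {set V}) (p : seq V) : Prop :=
  all (fun v => v \notin F) p.

Definition robust_reach (V : finType) (E : rel V) (f : nat) (A B F : {set V}) : Prop :=
  B = set0 \/
  forall b, b \in B ->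
    exists ps : seq (seq V),
      size ps = f.+1 /\
      (forall p, p \in ps -> ABpath E A b p /\ excludes F p) /\
      (forall i j, i < size ps -> j < size ps -> i <> j ->
         forall v, v \in nth [::] ps i -> v \in nth [::] ps j -> v = b).

(* Fix b in B and let N be the in-neighbours of b outside F. If in G - F - b
   every A-N separator has more than f vertices, Menger's theorem gives f+1
   disjoint A-N walks there; shortened and extended by b they form the required
   paths. Otherwise take such a separator S with |S| <= f and let R be the set
   of vertices that reach b along edges leaving vertices outside F, S and b.
   R misses A and F, and every vertex outside R and F with an edge into R lies
   in S. So for the partition L = A, R, F, C = the rest, the alternative
   A u C -> R of Condition 1 fails, and R u C -> A gives B -> A because
   R u C is contained in B.

   Menger's theorem (for walks, with separators allowed to meet A and B) is
   proved by induction on the number of edges. Delete an edge xy. If G - xy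
   has an A-B separator S with |S| < k, then S+x and S+y separate A from B in
   G, hence |S+y| = k, and induction gives k disjoint A-(S+x) walks and k disjoint
   (S+y)-B walks in G - xy. Cut them to meet S+x only at their ends and S+y
   only at their starts; a walk ending at s in S continues along the walk
   starting at s, the walk ending at x continues through xy along the walk
   starting at y, and the glued walks stay disjoint because S separates A from
   B in G - xy. *)

From mathcomp Require Import all_boot.
From Stdlib Require Import Classical.
Set Implicit Arguments. Unset Strict Implicit. Unset Printing Implicit Defensive.

Lemma cat_eq_cons (T : eqType) (p1 p2 r : seq T) v t :
  p1 ++ v :: p2 = t :: r -> {subset p2 <= r} /\ (v = t \/ v \in r).
Proof.
case: p1 => [|z p1] /= [Ez Er]; first by rewrite -Ez -Er; split=> //; left.
rewrite -Er; split=> [u Hu|]; last by right; rewrite mem_cat mem_head orbT.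
by rewrite mem_cat inE Hu !orbT.
Qed.

Lemma cat_eq_rcons (T : eqType) (p1 p2 s : seq T) v w :
  p1 ++ v :: p2 = rcons s w -> {subset p1 <= s} /\ (v = w \/ v \in s).
Proof.
move/(congr1 rev); rewrite rev_cat rev_cons rev_rcons cat_rcons => /cat_eq_cons.
by case=> Hsub Hv; split=> [u|]; rewrite -!(mem_rev s) // => Hu; apply/Hsub; rewrite mem_rev.
Qed.

Lemma pairwise_sym_in (T : eqType) (r : rel T) s :
  symmetric r -> pairwise r s -> {in s &, forall a b, a != b -> r a b}.
Proof.
move=> r_sym; elim: s => [|z s IH] //= /andP [/allP r_z /IH{}IH] a b.
rewrite !inE => /predU1P [->|Ha] /predU1P [->|Hb]; rewrite ?eqxx // => ab.
- exact: r_z.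
- by rewrite r_sym; apply: r_z.
- exact: IH.
Qed.

Lemma disjoint_seqP (T : finType) (p q : seq T) :
  reflect (forall v, v \in p -> v \in q -> False) [disjoint p & q].
Proof.
rewrite disjoint_has; apply: (iffP hasPn) => H v Hp; first by apply/negP/H.
by apply/negP/H.
Qed.

Section Walks.
Variable V : finType.
Implicit Types (e : rel V) (a c t w : V) (A B S X Y : {set V}) (p q s : seq V).

Definition walk e a c p :=
  if p is z :: q then [&& z == a, path e z q & last z q == c] else false.

Definition ABwalk e A B p := exists a c, [/\ a \in A, c \in B & walk e a c p].

Definition separates e A B S := forall p, ABwalk e A B p -> has [in S] p.

Definition linkage e A B k ps :=
  [/\ size ps = k, forall p, p \in ps -> ABwalk e A B p
    & pairwise (fun p q : seq V => [disjoint p & q]) ps].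

Definition revrel e : rel V := fun u v => e v u.

Lemma walk_head e a c p a0 : walk e a c p -> head a0 p = a.
Proof. by case: p => [|z q] //= /and3P [/eqP]. Qed.

Lemma walk_last e a c p c0 : walk e a c p -> last c0 p = c.
Proof. by case: p => [|z q] //= /and3P [_ _ /eqP]. Qed.

Lemma mem_walk_head e a c p : walk e a c p -> a \in p.
Proof. by case: p => [|z q] //= /and3P [/eqP -> _ _]; apply: mem_head. Qed.

Lemma mem_walk_last e a c p : walk e a c p -> c \in p.
Proof. by case: p => [|z q] //= /and3P [_ _ /eqP <-]; apply: mem_last. Qed.

Lemma walk1 e a : walk e a a [:: a].
Proof. by rewrite /= eqxx. Qed.

Lemma walk_rcons e a c d p : walk e a c p -> e c d -> walk e a d (rcons p d).
Proof.
case: p => [|z q] //= /and3P [-> Hp /eqP <-] Hd.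
by rewrite rcons_path Hp Hd last_rcons eqxx.
Qed.

Lemma walk_cat e a c w p1 p2 :
  walk e a c (p1 ++ w :: p2) = walk e a w (rcons p1 w) && walk e w c (w :: p2).
Proof.
case: p1 => [|z q] /=; first by rewrite !eqxx andbT.
by rewrite cat_path rcons_path last_cat last_rcons eqxx /= andbT !andbA.
Qed.

Lemma sub_walk e e' a c p : subrel e e' -> walk e a c p -> walk e' a c p.
Proof.
move=> ee'; case: p => [|z q] //= /and3P [-> Hp ->]; rewrite andbT.
exact: sub_path Hp.
Qed.

Lemma walk_rev e a c p : walk e a c p -> walk (revrel e) c a (rev p).
Proof.
case: p => [|z q] //= /and3P [/eqP -> Hp /eqP <-].
rewrite lastI rev_rcons /= eqxx rev_path Hp /=.
by case: q {Hp} => [|y q] //=; rewrite rev_cons last_rcons.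
Qed.

Lemma ABwalk_rev e A B p : ABwalk e A B p -> ABwalk (revrel e) B A (rev p).
Proof. by case=> a [c [Ha Hc Hw]]; exists c, a; split=> //; apply: walk_rev. Qed.

Lemma sub_ABwalk e e' A B p : subrel e e' -> ABwalk e A B p -> ABwalk e' A B p.
Proof. by move=> ee' [a [c [Ha Hc Hw]]]; exists a, c; split=> //; apply: sub_walk Hw. Qed.

Lemma eq_separates e e' A B S : e =2 e' -> separates e A B S -> separates e' A B S.
Proof. by move=> ee' HS p Hp; apply/HS/(sub_ABwalk _ Hp) => u v; rewrite ee'. Qed.

Lemma separates_rev e A B S : separates e A B S -> separates (revrel e) B A S.
Proof. by move=> HS p /ABwalk_rev /HS; rewrite has_rev. Qed.

Lemma sub_linkage e e' A B k ps : subrel e e' -> linkage e A B k ps -> linkage e' A B k ps.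
Proof. by move=> ee' [Hk Hw Hd]; split=> // p /Hw; apply: sub_ABwalk. Qed.

Lemma linkage_rev e A B k ps : linkage e A B k ps -> linkage (revrel e) B A k (map rev ps).
Proof.
case=> Hk Hw Hd; split; first by rewrite size_map.
  by move=> q /mapP [p /Hw Hp ->]; apply: ABwalk_rev.
rewrite pairwise_map; apply: sub_pairwise Hd => p q /=.
by rewrite (eq_disjoint (mem_rev p)) (eq_disjoint_r (mem_rev q)).
Qed.

Lemma linkage_heads e Y B k qs a0 : linkage e Y B k qs -> #|Y| = k ->
  {subset Y <= map (head a0) qs}.
Proof.
case=> Hk Hw Hd cardY.
have headY q : q \in qs -> head a0 q \in Y /\ head a0 q \in q.
  by case/Hw=> t [c [Ht _ Hq]]; rewrite (walk_head _ Hq); split=> //; apply: mem_walk_head Hq.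
have uniq_heads : uniq (map (head a0) qs).
  rewrite uniq_pairwise pairwise_map; apply: sub_in_pairwise (allss qs) Hd.
  move=> p q /headY [_ hp] /headY [_ hq] /= Hpq.
  by apply: contraTneq hq => <-; rewrite (disjointFr Hpq hp).
have sub_heads : {subset map (head a0) qs <= enum Y}.
  by move=> _ /mapP [q /headY [hY _] ->]; rewrite mem_enum.
have [|_ eq_heads] := uniq_min_size uniq_heads sub_heads.
  by rewrite -cardE size_map Hk cardY.
by move=> t Ht; rewrite eq_heads mem_enum.
Qed.

Definition trim X p := take (find [in X] p).+1 p.

Lemma trimP e A X p : ABwalk e A X p ->
  exists s w, [/\ trim X p = rcons s w, ABwalk e A X (rcons s w) & ~~ has [in X] s].
Proof.
case=> a [c [Ha Hc Hw]].
have hasX : has [in X] p by apply/hasP; exists c => //; apply: mem_walk_last Hw.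
rewrite /trim (take_nth a) -?has_find //.
case: (split_find_nth a hasX) Hw => w s1 s2 Hwx Hs1 Hw.
exists s1, w; split=> //; exists a, w; split=> //.
by move: Hw; rewrite cat_rcons walk_cat => /andP [].
Qed.

Lemma linkage_trim_last e A X k ps : linkage e A X k ps ->
  exists ps', linkage e A X k ps' /\
    forall p, p \in ps' -> exists s w, p = rcons s w /\ ~~ has [in X] s.
Proof.
case=> Hk Hw Hd; exists (map (trim X) ps); split; last first.
  by move=> _ /mapP [p /Hw /trimP [s [w [-> _ HX]]] ->]; exists s, w.
split; first by rewrite size_map.
  by move=> _ /mapP [p /Hw /trimP [s [w [-> HX _]]] ->].
rewrite pairwise_map; apply: sub_pairwise Hd => p q /= Hpq.
by apply: disjointWl (disjointWr _ Hpq); apply/subsetP => v /mem_take.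
Qed.

Lemma linkage_trim_head e Y B k qs : linkage e Y B k qs ->
  exists qs', linkage e Y B k qs' /\ forall q, q \in qs' -> ~~ has [in Y] (behead q).
Proof.
move/linkage_rev/linkage_trim_last => [ps [/linkage_rev Hl Hlast]].
exists (map rev ps); split; first by rewrite -[e]/(revrel (revrel e)).
by move=> _ /mapP [p /Hlast [s [w [-> Hs]]] ->]; rewrite rev_rcons /= has_rev.
Qed.

End Walks.

Section DeleteEdge.
Variable V : finType.
Implicit Types (e : rel V) (a c w x y z : V) (A B S T : {set V}) (q s : seq V).

Definition deledge e x y : rel V := fun u v => e u v && ((u != x) || (v != y)).

Lemma deledge_sub e x y : subrel (deledge e x y) e.
Proof. by move=> u v /andP []. Qed.

Lemma deledge_rev e x y : revrel (deledge e x y) =2 deledge (revrel e) y x.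
Proof. by move=> u v; rewrite /deledge /revrel orbC. Qed.

Lemma path_deledge e x y z q : path e z q -> x \notin belast z q -> path (deledge e x y) z q.
Proof.
elim: q z => [|v q IH] z //= /andP [ezv Hp]; rewrite inE negb_or => /andP [zx Hq].
by rewrite /deledge ezv eq_sym zx IH.
Qed.

Lemma walk_deledge e x y a c s w :
  walk e a c (rcons s w) -> x \notin s -> walk (deledge e x y) a c (rcons s w).
Proof.
case: s => [|z s] //= /and3P [-> Hp ->] Hx; rewrite andbT.
by apply: path_deledge Hp _; rewrite belast_rcons.
Qed.

Lemma separates_deledge_x e x y A B S :
  separates (deledge e x y) A B S -> separates e A B (x |: S).
Proof.
move=> HS p; have [xp _|xNp [a [c [Ha Hc Hw]]]] := boolP (x \in p).
  by apply/hasP; exists x; rewrite // !inE eqxx.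
case/lastP: p Hw xNp => [//|s w] Hw xNp.
have xNs : x \notin s by apply: contra xNp; rewrite mem_rcons inE => ->; rewrite orbT.
apply: sub_has (HS _ _) => [v|]; first by rewrite /= !inE => ->; rewrite orbT.
by exists a, c; split=> //; apply: walk_deledge.
Qed.

Lemma separates_prefix e x y A B S T :
  separates (deledge e x y) A B S -> separates (deledge e x y) A (x |: S) T ->
  separates e A B T.
Proof.
move=> HS HT p Hp; have hitxS := separates_deledge_x HS Hp.
case/split_find: hitxS Hp => w s1 s2 Hw Hs1 [a [c [Ha Hc]]].
rewrite cat_rcons walk_cat => /andP [Hw1 _].
have xNs1 : x \notin s1 by apply: contra Hs1 => xs1; apply/hasP; exists x; rewrite // !inE eqxx.
have Hw1' : ABwalk (deledge e x y) A (x |: S) (rcons s1 w).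
  by exists a, w; split=> //; apply: walk_deledge.
by rewrite -cat_rcons has_cat (HT _ Hw1').
Qed.

Lemma separates_deledge_y e x y A B S :
  separates (deledge e x y) A B S -> separates e A B (y |: S).
Proof.
move/separates_rev/(eq_separates (deledge_rev e x y)).
by move/separates_deledge_x/separates_rev.
Qed.

Lemma separates_suffix e x y A B S T :
  separates (deledge e x y) A B S -> separates (deledge e x y) (y |: S) B T ->
  separates e A B T.
Proof.
move=> /separates_rev /(eq_separates (deledge_rev e x y)) HS.
move=> /separates_rev /(eq_separates (deledge_rev e x y)) HT.
exact/separates_rev/(separates_prefix HS HT).
Qed.

End DeleteEdge.

Section Glue.
Variables (V : finType) (e : rel V) (x y : V) (A B S : {set V}) (k : nat).
Variables Ps Qs : seq (seq V).
Let e' := deledge e x y.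
Hypotheses (exy : e x y) (yNS : y \notin S) (cardyS : #|y |: S| = k).
Hypothesis sepS : separates e' A B S.
Hypotheses (linkP : linkage e' A (x |: S) k Ps) (linkQ : linkage e' (y |: S) B k Qs).
Hypothesis Ps_last : forall p, p \in Ps -> exists s w, p = rcons s w /\ ~~ has [in x |: S] s.
Hypothesis Qs_head : forall q, q \in Qs -> ~~ has [in y |: S] (behead q).

Lemma Ps_walk p : p \in Ps ->
  exists a, [/\ a \in A, last x p \in x |: S & walk e' a (last x p) p].
Proof.
move=> pP; case: linkP => _ /(_ p pP) [a [w [Ha Hw Hp]]] _.
by exists a; rewrite (walk_last _ Hp).
Qed.

Lemma Qs_walk q : q \in Qs ->
  exists c, [/\ c \in B, head y q \in y |: S & walk e' (head y q) c q].
Proof.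
move=> qQ; case: linkQ => _ /(_ q qQ) [t [c [Ht Hc Hq]]] _.
by exists c; rewrite (walk_head _ Hq).
Qed.

Lemma glue_cross p q v : p \in Ps -> q \in Qs -> v \in p -> v \in q ->
  [/\ v \in S, v = last x p & v = head y q].
Proof.
move=> pP qQ vp vq.
have [a [Ha _ Hp]] := Ps_walk pP; have [c [Hc _ Hq]] := Qs_walk qQ.
have [s [w [Ep sX]]] := Ps_last pP; have rY := Qs_head qQ.
case: q qQ vq Hq rY => [//|t r] _ vq Hq /= rY; rewrite Ep last_rcons /=.
have [p1 [p2 Ep']] : exists p1 p2, p = p1 ++ v :: p2.
  by case/splitPr: vp => p1 p2; exists p1, p2.
have [q1 [q2 Eq]] : exists q1 q2, t :: r = q1 ++ v :: q2.
  by case/splitPr: vq => q1 q2; exists q1, q2.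
have [p1s vws] := cat_eq_rcons (etrans (esym Ep') Ep).
have [q2r vtr] := cat_eq_cons (esym Eq).
have notin_s u : u \in S -> u \notin s.
  by move=> uS; apply: contra sX => us; apply/hasP; exists u; rewrite // inE uS orbT.
have notin_r u : u \in S -> u \notin r.
  by move=> uS; apply: contra rY => ur; apply/hasP; exists u; rewrite // inE uS orbT.
have vS : v \in S.
  (* The walk [p1 ++ v :: q2] avoids xy, so it meets S; by the choice of the cuts
     it can only do so at v. *)
  have : has [in S] (p1 ++ v :: q2).
    apply: sepS; exists a, c; split=> //; rewrite walk_cat.
    by move: Hp Hq; rewrite Ep' Eq !walk_cat => /andP [-> _] /andP [_ ->].
  case/hasP=> u; rewrite mem_cat inE => /or3P [/p1s us|/eqP -> //|/q2r ur] uS.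
    by rewrite (negPf (notin_s u uS)) in us.
  by rewrite (negPf (notin_r u uS)) in ur.
split=> //.
  by case: vws => // vs; rewrite (negPf (notin_s v vS)) in vs.
by case: vtr => // vr; rewrite (negPf (notin_r v vS)) in vr.
Qed.

Let g u := if u == x then y else u.

Lemma g_inj : {in x |: S &, injective g}.
Proof.
have inS u : u \in x |: S -> u != x -> u \in S by case/setU1P => [->|]; rewrite ?eqxx.
move=> u u' uX u'X; rewrite /g; case: eqP => [->|/eqP ux]; case: eqP => [->|/eqP u'x] // Ey.
  by move: yNS; rewrite Ey (inS _ u'X u'x).
by move: yNS; rewrite -Ey (inS _ uX ux).
Qed.

Let partner p := nth [::] Qs (index (g (last x p)) (map (head y) Qs)).

Lemma partnerP p : p \in Ps -> partner p \in Qs /\ head y (partner p) = g (last x p).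
Proof.
case/Ps_walk=> a [_ Hl _].
have gY : g (last x p) \in map (head y) Qs.
  apply: (linkage_heads y linkQ cardyS); move: Hl; rewrite /g.
  case/setU1P => [->|lS]; first by rewrite eqxx setU11.
  by case: eqP => _; rewrite ?setU11 ?setU1r.
rewrite -index_mem size_map in gY; split; first exact: mem_nth.
by rewrite -[head y _](nth_map [::] y) // nth_index // -index_mem size_map.
Qed.

Let glue p := p ++ (if last x p == x then partner p else behead (partner p)).

Lemma glue_walk p : p \in Ps -> ABwalk e A B (glue p).
Proof.
move=> pP; have [qQ hq] := partnerP pP.
have [a [Ha _ Hp]] := Ps_walk pP; have [c [Hc _ Hq]] := Qs_walk qQ.
move: Hp Hq; rewrite hq /glue /g.
have ee' := @deledge_sub _ e x y.
case: (partner p) => [//|t r] /(sub_walk ee') Hp /(sub_walk ee') Hq.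
exists a, c; split=> //; move: Hq; case: eqP => [lx|_] Hq.
all: move/(walk_head t): (Hq) => /= Et; subst t.
  by rewrite walk_cat Hq andbT; apply: walk_rcons Hp _; rewrite lx.
case/lastP: p {pP qQ hq} Hp Hq => [//|s w]; rewrite last_rcons => Hp Hq.
by rewrite cat_rcons walk_cat Hp.
Qed.

Lemma mem_glue p v : v \in glue p -> v \in p \/ v \in partner p.
Proof.
rewrite mem_cat => /orP [vp|vq]; [by left | right].
by move: vq; case: ifP => // _; apply: mem_behead.
Qed.

Lemma glue_cross_partner p p' v : p \in Ps -> p' \in Ps -> [disjoint p & p'] ->
  v \in p -> v \notin partner p'.
Proof.
move=> pP p'P dpp' vp; apply/negP => vq.
have [qQ hq] := partnerP p'P; have [a [_ _ Hp']] := Ps_walk p'P.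
have [vS _ vh] := glue_cross pP qQ vp vq; move: vh; rewrite hq /g.
case: eqP => [_ vy|_ vl]; first by move: yNS; rewrite -vy vS.
by move: (mem_walk_last Hp'); rewrite -vl (disjointFr dpp' vp).
Qed.

Lemma glue_disjoint p p' : p \in Ps -> p' \in Ps -> [disjoint p & p'] ->
  [disjoint glue p & glue p'].
Proof.
move=> pP p'P dpp'; apply/disjoint_seqP => v /mem_glue [vp|vq] /mem_glue [vp'|vq'].
- by rewrite (disjointFr dpp' vp) in vp'.
- by rewrite (negPf (glue_cross_partner pP p'P dpp' vp)) in vq'.
- by rewrite disjoint_sym in dpp'; rewrite (negPf (glue_cross_partner p'P pP dpp' vp')) in vq.
have [qQ hq] := partnerP pP; have [q'Q hq'] := partnerP p'P.
have [a [_ lX Hp]] := Ps_walk pP; have [a' [_ l'X Hp']] := Ps_walk p'P.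
have [Eq|Nq] := eqVneq (partner p) (partner p').
  move: hq; rewrite Eq hq' => /esym/(g_inj lX l'X) El.
  by have := mem_walk_last Hp'; rewrite -El (disjointFr dpp' (mem_walk_last Hp)).
have dsym : symmetric (fun q q' : seq V => [disjoint q & q']) by move=> q q'; apply: disjoint_sym.
case: linkQ => _ _ /(pairwise_sym_in dsym) /(_ _ _ qQ q'Q Nq) dqq'.
by rewrite (disjointFr dqq' vq) in vq'.
Qed.

Lemma glue_linkage : exists ps, linkage e A B k ps.
Proof.
exists (map glue Ps); case: linkP => Hk _ Hd; split.
- by rewrite size_map.
- by move=> _ /mapP [p pP ->]; apply: glue_walk.
rewrite pairwise_map; apply: sub_in_pairwise (allss Ps) Hd => p p' pP p'P.
exact: glue_disjoint.
Qed.

End Glue.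

Section Menger.
Variable V : finType.
Implicit Types (e : rel V) (A B S T : {set V}).

Definition edges e := [set u : V * V | e u.1 u.2].

Lemma menger_edgeless e A B k : edges e = set0 ->
  (forall S, separates e A B S -> k <= #|S|) -> exists ps, linkage e A B k ps.
Proof.
move=> noE Hk.
have sepAB : separates e A B (A :&: B).
  move=> [|z [|z' q]] [a [c [Ha Hc]]] //=.
    by case/andP=> /eqP -> /eqP ac; rewrite !inE Ha ac Hc.
  by case/and3P=> _ /andP [ezz' _] _; have := in_set0 (z, z'); rewrite -noE inE ezz'.
exists [seq [:: v] | v <- take k (enum (A :&: B))]; split.
- by rewrite size_map size_takel // -cardE Hk.
- move=> p /mapP [v /mem_take]; rewrite mem_enum inE => /andP [Ha Hb] ->.
  by exists v, v; split=> //; apply: walk1.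
rewrite pairwise_map; have: uniq (take k (enum (A :&: B))) by apply/take_uniq/enum_uniq.
rewrite uniq_pairwise; apply: sub_pairwise => u v /=.
by rewrite disjoint_has /= orbF mem_seq1.
Qed.

Lemma card_edges_deledge e x y : e x y -> #|edges (deledge e x y)| < #|edges e|.
Proof.
move=> exy; apply: proper_card; apply/properP; split.
  by apply/subsetP => -[u v]; rewrite !inE => /andP [].
by exists (x, y); rewrite !inE /deledge ?exy ?eqxx.
Qed.

Theorem menger e A B k :
  (forall S, separates e A B S -> k <= #|S|) -> exists ps, linkage e A B k ps.
Proof.
elim: {e}_.+1 {-2}e (ltnSn #|edges e|) A B => // n IH e He A B Hk.
have [noE|[[x y]]] := set_0Vmem (edges e); first exact: menger_edgeless.
rewrite inE /= => exy; pose e' := deledge e x y.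
have {}IH := IH e' (leq_trans (card_edges_deledge exy) He).
have [[S [sepS ltSk]]|noS] := classic (exists S, separates e' A B S /\ #|S| < k); last first.
  have [|ps Hps] := IH A B; last by exists ps; apply: sub_linkage Hps; apply: deledge_sub.
  by move=> S sepS; rewrite leqNgt; apply/negP => ltSk; apply: noS; exists S.
have leYk := Hk _ (separates_deledge_y sepS).
have yNS : y \notin S by apply/negP => yS; move: leYk; rewrite cardsU1 yS add0n leqNgt ltSk.
have cardYS : #|y |: S| = k by apply/eqP; rewrite eqn_leq leYk cardsU1 yNS add1n ltSk.
have [Ps0 HPs0] := IH A (x |: S) (fun T HT => Hk T (separates_prefix sepS HT)).
have [Qs0 HQs0] := IH (y |: S) B (fun T HT => Hk T (separates_suffix sepS HT)).
have [Ps [HPs Ps_last]] := linkage_trim_last HPs0.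
have [Qs [HQs Qs_head]] := linkage_trim_head HQs0.
exact: glue_linkage exy yNS cardYS sepS HPs HQs Ps_last Qs_head.
Qed.

End Menger.

Definition avoiding (V : finType) (E : rel V) (X : {set V}) : rel V :=
  [rel u v | [&& E u v, u \notin X & v \notin X]].

Definition fan (V : finType) (E : rel V) (A F : {set V}) (b : V) (k : nat) :=
  exists ps : seq (seq V),
    size ps = k /\
    (forall p, p \in ps -> ABpath E A b p /\ excludes F p) /\
    (forall i j, i < size ps -> j < size ps -> i <> j ->
       forall v, v \in nth [::] ps i -> v \in nth [::] ps j -> v = b).

Lemma path_avoiding (V : finType) (E : rel V) X z q :
  path (avoiding E X) z q -> all [predC X] q.
Proof. by elim: q z => [|v q IH] z //= /andP [/and3P [_ _ ->] /IH]. Qed.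

Lemma path_sources (V : finType) (E : rel V) (P : pred V) z q :
  path [rel u v | E u v && P u] z q -> all P (belast z q).
Proof. by elim: q z => [|v q IH] z //= /andP [/andP [_ ->] /IH]. Qed.

Lemma reaches_mono (V : finType) (E : rel V) f (X X' Y : {set V}) :
  X \subset X' -> reaches E f X Y -> reaches E f X' Y.
Proof.
move=> sXX' XY; apply: leq_trans XY _; apply/subset_leq_card/subsetP => v.
by rewrite !inE => /andP [/(subsetP sXX') -> ->].
Qed.

Lemma partition4_compl (V : finType) (L R F : {set V}) :
  [disjoint L & R] -> [disjoint L & F] -> [disjoint R & F] ->
  partition4 L (~: (L :|: R :|: F)) R F.
Proof.
move=> dLR dLF dRF; rewrite /partition4 dLR dLF dRF /=.
rewrite -!setI_eq0; apply/and4P; split; apply/eqP/setP => v; rewrite !inE;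
  by case: (v \in L); case: (v \in R); case: (v \in F).
Qed.

Section FanToB.
Variables (V : finType) (E : rel V) (f : nat) (A B F : {set V}) (b : V).
Hypotheses (Hpart : partition3 A B F) (bB : b \in B).

Let H := avoiding E (b |: F).
Let N := [set u | E u b && (u \notin F)].

Lemma notin_of_partition3 : [/\ b \notin A, b \notin F & {in A, forall a, a \notin b |: F}].
Proof.
case: Hpart => dAB dAF dBF _; split; first by rewrite (disjointFl dAB bB).
  by rewrite (disjointFr dBF bB).
move=> a aA; rewrite !inE negb_or (disjointFr dAF aA) andbT.
by apply: contraTneq aA => ->; rewrite (disjointFl dAB bB).
Qed.

Let to_path p := if p is a :: q then a :: rcons (shorten a q) b else [::].

Lemma to_pathP p : ABwalk H A N p ->
  [/\ ABpath E A b (to_path p), excludes F (to_path p) & {subset to_path p <= b :: p}].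
Proof.
have [bNA bNF AX] := notin_of_partition3.
case: p => [|a q] [a' [c [aA cN]]] //= /and3P [/eqP Ea Hq /eqP Hc]; subst a' c.
case: (shortenP Hq) cN => q' Hq' uq' q'q; rewrite inE => /andP [Eqb qF].
have q'X : all [predC b |: F] (a :: q') by rewrite /= AX //=; apply: path_avoiding Hq'.
have bNq' : b \notin a :: q'.
  by apply: contraTN q'X => bq; apply/allPn; exists b; rewrite // !inE eqxx.
split.
- split=> //; exists a, (rcons q' b); do !split=> //; last exact: last_rcons.
    by rewrite rcons_path Eqb andbT; apply: sub_path Hq' => u v /and3P [].
  by rewrite -rcons_cons rcons_uniq bNq'.
- rewrite /excludes -rcons_cons all_rcons bNF; apply: sub_all q'X => v.
  by rewrite /= !inE negb_or => /andP [].
move=> v; rewrite -rcons_cons mem_rcons !inE => /predU1P [->|]; first by rewrite eqxx.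
by case/predU1P=> [->|/q'q ->]; rewrite ?eqxx !orbT.
Qed.

Lemma fan_of_linkage k ps : linkage H A N k ps -> fan E A F b k.
Proof.
case=> Hk Hw Hd; exists (map to_path ps); split; first by rewrite size_map.
split; first by move=> _ /mapP [p /Hw /to_pathP [Hp HF _] ->].
move=> i j; rewrite size_map => ilt jlt ij v; rewrite !(nth_map [::]) //.
have [_ _ sub_i] := to_pathP (Hw _ (mem_nth [::] ilt)).
have [_ _ sub_j] := to_pathP (Hw _ (mem_nth [::] jlt)).
have dij : [disjoint nth [::] ps i & nth [::] ps j].
  have /pairwiseP Hnth := Hd; case: (ltngtP i j) => [lt|gt|eq] //.
    exact: Hnth [::] i j ilt jlt lt.
  by rewrite disjoint_sym; apply: Hnth [::] j i jlt ilt gt.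
move=> /sub_i; rewrite inE => /predU1P [//|vi] /sub_j; rewrite inE => /predU1P [//|vj].
by have := disjointFr dij vi; rewrite vj.
Qed.

Section SmallSeparator.
Variable S : {set V}.
Hypothesis sepS : separates H A N S.

Let Z := b |: F :|: S.
Let R := [set v | connect [rel u v | E u v && (u \in [predC Z])] v b].

Lemma b_in_R : b \in R.
Proof. by rewrite inE connect0. Qed.

Lemma R_notin_F v : v \in R -> v \notin F.
Proof.
have [_ bNF _] := notin_of_partition3.
rewrite inE => /connectP [[|w p] /= Hp Hl]; first by rewrite -Hl.
by move: Hp => /andP [/andP [_]]; rewrite !inE !negb_or => /andP [/andP [_ ->]].
Qed.

Lemma A_notin_R a : a \in A -> a \notin R.
Proof.
have [bNA _ _] := notin_of_partition3.
move=> aA; rewrite inE; apply/negP => /connectP [p Hp Hl].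
case/lastP: p Hp Hl => [_ ba|q w]; first by rewrite ba aA in bNA.
rewrite last_rcons => Hp Ewb; subst w.
have qZ : all [predC Z] (a :: q).
  by rewrite -(belast_rcons a q b); apply: (path_sources (P := [predC Z])) Hp.
have notZ u : u \in [predC Z] -> [/\ u \notin S, u \notin F & u != b].
  by rewrite !inE !negb_or => /andP [/andP [? ?] ?].
move: Hp; rewrite rcons_path => /andP [Hq /andP [Eqb _]].
have Hw : ABwalk H A N (a :: q).
  exists a, (last a q); split=> //.
    by rewrite inE Eqb; have [_ -> _] := notZ _ (allP qZ _ (mem_last a q)).
  rewrite /= !eqxx andbT; apply: sub_in_path qZ Hq => u v uZ vZ /andP [Euv _].
  have [_ uNF uNb] := notZ u uZ; have [_ vNF vNb] := notZ v vZ.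
  by rewrite /H /avoiding /= Euv !inE !negb_or uNF uNb vNF vNb.
by apply/negP: (sepS Hw); apply/hasPn => u /(allP qZ) /notZ [].
Qed.

Lemma in_S_of_edge_to_R i j : i \notin R -> i \notin F -> j \in R -> E i j -> i \in S.
Proof.
move=> iNR iNF jR Eij; have [//|iNS] := boolP (i \in S).
have iNb : i != b by apply: contraNneq iNR => ->; apply: b_in_R.
case/negP: iNR; rewrite /R !inE in jR *; apply: connect_trans jR; apply: connect1.
by rewrite /= Eij !inE !negb_or iNF iNS iNb.
Qed.

Lemma reaches_of_small_separator : condition1 E f -> A != set0 -> #|F| <= f -> #|S| <= f ->
  reaches E f B A.
Proof.
move=> Hcond HA HF HS; have [dAB dAF dBF coverV] := Hpart.
have dAR : [disjoint A & R] by rewrite disjoint_subset; apply/subsetP => a /A_notin_R.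
have dRF : [disjoint R & F] by rewrite disjoint_subset; apply/subsetP => v /R_notin_F.
have Rn0 : R != set0 by apply/set0Pn; exists b; apply: b_in_R.
case: (Hcond _ _ _ _ (partition4_compl dAR dAF dRF) HA Rn0 HF) => [toR|toA].
  suff : f.+1 <= #|S| by rewrite ltnNge HS.
  apply: leq_trans toR _; apply/subset_leq_card/subsetP => i.
  rewrite inE => /andP [iAC /existsP [j /andP [jR Eij]]].
  have [iNR iNF] : i \notin R /\ i \notin F.
    case/setUP: iAC => [iA|]; first by rewrite A_notin_R // (disjointFr dAF iA).
    by rewrite !inE !negb_or => /andP [/andP [_ ->] ->].
  exact: in_S_of_edge_to_R iNR iNF jR Eij.
apply: reaches_mono toA; apply/subsetP => v vRC.
have [vNA vNF] : v \notin A /\ v \notin F.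
  case/setUP: vRC => [vR|]; first by rewrite (disjointFl dAR vR) R_notin_F.
  by rewrite !inE !negb_or => /andP [/andP [-> _] ->].
by move: (in_setT v); rewrite -coverV !inE (negPf vNA) (negPf vNF) orbF.
Qed.
End SmallSeparator.

Lemma fan_of_not_reaches : condition1 E f -> A != set0 -> #|F| <= f -> ~ reaches E f B A ->
  fan E A F b f.+1.
Proof.
move=> Hcond HA HF nBA.
have [[S [sepS leSf]]|noS] := classic (exists S, separates H A N S /\ #|S| <= f).
  by exfalso; apply/nBA/(reaches_of_small_separator sepS).
have [|ps Hps] := @menger _ H A N f.+1; last exact: fan_of_linkage Hps.
by move=> S sepS; rewrite ltnNge; apply/negP => leSf; apply: noS; exists S.
Qed.

End FanToB.

Theorem lemma5 (V : finType) (E : rel V) (f : nat)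
  (Hsimple : simple_digraph E) (Hcond : condition1 E f)
  (A B F : {set V}) (Hpart : partition3 A B F) (HA : A != set0)
  (HF : #|F| <= f) :
  ~ reaches E f B A -> robust_reach E f A B F.
Proof.
by move=> nBA; right=> b bB; exact: (fan_of_not_reaches Hpart bB Hcond HA HF nBA).
Qed.
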